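(* Let $n\geq 3$ and let $k\in\mathbb{Z}_n$ with $k\neq 0$ and $2k\not\equiv 0\pmod n$. Let $C$ be a subset of the vertex set of $\mathrm{GP}(n,k)$. Then $C$ is a total perfect code in $\mathrm{GP}(n,k)$ if and only if one of the following holds: (i) $n\equiv 0\pmod 3$, $k\not\equiv 0\pmod 3$, and $C=C_j:=\{u_{3i+j},v_{3i+j}\mid i\in\mathbb{Z}_n\}$ for some $j\in\{0,1,2\}$; (ii) $n\equiv 0\pmod 6$, $k\equiv \pm 1\pmod 6$, and $C=C'_j:=\{u_{6i+j},u_{6i+j+1},v_{6i+j+3},v_{6i+j+4}\mid i\in\mathbb{Z}_n\}$ for some $j\in\{0,1,2,3,4,5\}$ (all indices modulo $n$).
   Context: For an integer $n\geq 3$ and a nonzero $k\in\mathbb{Z}_n$, the generalized Petersen graph $\mathrm{GP}(n,k)$ is the simple graph with vertex set $\{u_i,v_i\mid i\in\mathbb{Z}_n\}$ and edges $u_iu_{i+1}$, $u_iv_i$, $v_iv_{i+k}$ for all $i\in\mathbb{Z}_n$ (indices modulo $n$). Standing assumption: $2k\not\equiv 0\pmod n$, so that $\mathrm{GP}(n,k)$ is 3-regular. Congruences of $k$ modulo divisors of $n$ are well defined. A total perfect code in a graph $\Gamma$ is a set $C\subseteq V(\Gamma)$ such that every vertex of $\Gamma$ (whether in $C$ or not) is adjacent to exactly one vertex of $C$. *)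

From mathcomp Require Import all_boot.
Set Implicit Arguments. Unset Strict Implicit. Unset Printing Implicit Defensive.

(* Vertices of GP(n,k): pairs (i, b) with i : 'I_n;
   (i, false) is u_i and (i, true) is v_i.  Index arithmetic is modulo n. *)
Definition gpvert (n : nat) := ('I_n * bool)%type.

Definition gp_adj (n : nat) (k : 'I_n) (x y : gpvert n) : bool :=
  let i := val x.1 in let j := val y.1 in
  match x.2, y.2 with
  | false, false => (j == (i + 1) %% n) || (i == (j + 1) %% n)
  | true, true => (j == (i + k) %% n) || (i == (j + k) %% n)
  | _, _ => i == j
  end.

Definition total_perfect_code (n : nat) (k : 'I_n) (C : {set gpvert n}) : Prop :=
  forall x : gpvert n, #|[set y in C | gp_adj k x y]| = 1.

Definition Cj (n j : nat) : {set gpvert n} :=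
  [set x : gpvert n | [exists i : 'I_n, val x.1 == (3 * i + j) %% n]].

Definition Cpj (n j : nat) : {set gpvert n} :=
  [set x : gpvert n | [exists i : 'I_n,
     if x.2 then (val x.1 == (6 * i + j + 3) %% n) || (val x.1 == (6 * i + j + 4) %% n)
     else (val x.1 == (6 * i + j) %% n) || (val x.1 == (6 * i + j + 1) %% n)]].

(** Writing [A i] for "[u_i] is in the code"
    and [B i] for "[v_i] is in the code", perfect totality is the pair of local conditions
    A(i-1) + A(i+1) + B(i) = 1  and  B(i-k) + B(i+k) + A(i) = 1.
    Summing both over Z_n gives 2|A| + |B| = |A| + 2|B| = n, hence 3|A| = n.  If [A i] fails,
    some [B (i ± k)] fails, so some [A (i ± k ± 1)] holds, which switches off [B (i ± 1)] and
    forces [A (i ± 2)]: every window A(i-2) + A(i) + A(i+2) is at least 1.  Its sum over Z_n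
    is 3|A| = n, so every window is exactly 1.  Hence A has period 6, B(i) = A(i+3), and the
    remaining conditions only involve residues mod 6, where a finite check lists the codes. *)

From mathcomp Require Import all_boot ssralg finalg zmodp zify.
Set Implicit Arguments. Unset Strict Implicit. Unset Printing Implicit Defensive.
Import GRing.Theory.

Definition exactly_one (a b c : bool) := (a + b + c == 1)%N.

Lemma exactly_one_shift a b c d : exactly_one a b c -> exactly_one b c d -> d = a.
Proof. by case: a; case: b; case: c; case: d. Qed.

Lemma exactly_one_third a b c d : exactly_one a b c -> exactly_one a b d -> d = c.
Proof. by case: a; case: b; case: c; case: d. Qed.

Lemma periodic_mod (T : Type) (f : nat -> T) d :
  (forall i, f (i + d) = f i) -> forall i, f (i %% d) = f i.
Proof.
move=> f_per i; rewrite [in RHS](divn_eq i d) addnC.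
by elim: (i %/ d) => [|q IH]; rewrite ?addn0 // mulSnr addnA f_per.
Qed.

Lemma forall_iota_periodic (P : pred nat) d : 0 < d ->
  (forall i, P (i + d) = P i) -> (forall i, P i) <-> all P (iota 0 d).
Proof.
move=> d_gt0 P_per; split=> [P_all | /allP P_iota i]; first exact/allP.
by rewrite -(periodic_mod P_per) P_iota // mem_iota ltn_pmod.
Qed.

Lemma mkseq_periodic_eq (f g : nat -> bool) d : 0 < d ->
  (forall i, f (i + d) = f i) -> (forall i, g (i + d) = g i) ->
  mkseq f d = mkseq g d <-> f =1 g.
Proof.
move=> d_gt0 f_per g_per; split=> [fg i | fg]; last exact: eq_mkseq.
have i_lt : i %% d < d by rewrite ltn_pmod.
by rewrite -(periodic_mod f_per) -(periodic_mod g_per) -(nth_mkseq false f i_lt) fg nth_mkseq.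
Qed.

Definition Cj_pattern (j i : nat) := i %% 3 == j.
Definition Cpj_pattern (j i : nat) := (i %% 6 == j) || (i %% 6 == (j + 1) %% 6).

Lemma Cj_pattern_periodic N j : N %% 3 = 0 -> forall i, Cj_pattern j (i + N) = Cj_pattern j i.
Proof. by move=> N3 i; rewrite /Cj_pattern -modnDmr N3 addn0. Qed.

Lemma Cpj_pattern_periodic N j : N %% 6 = 0 -> forall i, Cpj_pattern j (i + N) = Cpj_pattern j i.
Proof. by move=> N6 i; rewrite /Cpj_pattern -modnDmr N6 addn0. Qed.

Fixpoint bitseqs (l : nat) : seq bitseq :=
  if l is l'.+1 then [seq b :: s | b <- [:: false; true], s <- bitseqs l'] else [:: [::]].

Lemma mem_bitseqs (s : bitseq) : s \in bitseqs (size s).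
Proof. by elim: s => [|b s IH] //; apply/allpairsP; exists (b, s); case: b. Qed.

Section Table.
Variables (s : bitseq) (r kk : nat).
Local Notation a i := (nth false s (i %% 6)).

Definition local6 := all (fun i =>
  exactly_one (a i) (a (i + 2)) (a (i + 4)) &&
  exactly_one (a (i + 3)) (a (i + 2 * kk + 3)) (a (i + kk))) (iota 0 6).

Definition periodic6 := all (fun i => a (i + r) == a i) (iota 0 6).

Definition classified6 :=
  [&& r %% 3 == 0, kk %% 3 != 0 & has (fun j => s == mkseq (Cj_pattern j) 6) (iota 0 3)] ||
  [&& r == 0, (kk == 1) || (kk == 5) & has (fun j => s == mkseq (Cpj_pattern j) 6) (iota 0 6)].
End Table.

Lemma classification_table : all (fun s => all (fun r => all (fun kk =>
  (periodic6 s r && local6 s kk) == classified6 s r kk) (iota 0 6)) (iota 0 6)) (bitseqs 6).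
Proof. by vm_compute. Qed.

Section Classification.
Variables (n kk : nat) (a : nat -> bool).
Hypothesis a_period6 : forall i, a (i + 6) = a i.

Let s := mkseq a 6.

Lemma nth_mkseq_period6 i : nth false s (i %% 6) = a i.
Proof. by rewrite nth_mkseq ?ltn_pmod // (periodic_mod a_period6). Qed.

Lemma periodic6_of_period : (forall i, a (i + n) = a i) -> periodic6 s (n %% 6).
Proof.
move=> a_n; apply/allP => i _.
by rewrite modnDmr !nth_mkseq_period6 a_n.
Qed.

Lemma local6P :
  (forall i, exactly_one (a i) (a (i + 2)) (a (i + 4))) /\
  (forall i, exactly_one (a (i + 3)) (a (i + 2 * kk + 3)) (a (i + kk))) <->
  local6 s (kk %% 6).
Proof.
rewrite /local6 -(forall_iota_periodic (isT : 0 < 6)); last first.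
  by move=> i; rewrite !nth_mkseq_period6 -!addnA !(addnC 6) !addnA !a_period6.
have a_mod x y : x %% 6 = y %% 6 -> a x = a y.
  by move=> xy; rewrite -nth_mkseq_period6 xy nth_mkseq_period6.
have kk_mod i : a (i + 2 * (kk %% 6) + 3) = a (i + 2 * kk + 3) by apply: a_mod; lia.
have kk_mod' i : a (i + kk %% 6) = a (i + kk) by apply: a_mod; lia.
split=> [[S2 Vk] i | all_i]; first by rewrite !nth_mkseq_period6 kk_mod kk_mod' S2 Vk.
by split=> i; have /andP[] := all_i i; rewrite !nth_mkseq_period6 kk_mod kk_mod'.
Qed.

Lemma classified6P :
  classified6 s (n %% 6) (kk %% 6) <->
  [/\ n %% 3 = 0, kk %% 3 != 0 & exists2 j, j < 3 & a =1 Cj_pattern j] \/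
  [/\ n %% 6 = 0, kk %% 6 = 1 \/ kk %% 6 = 5 & exists2 j, j < 6 & a =1 Cpj_pattern j].
Proof.
have patternP p : (forall i, p (i + 6) = p i) -> reflect (a =1 p) (s == mkseq p 6).
  move=> p_per; have [to_eq of_eq] := mkseq_periodic_eq (isT : 0 < 6) a_period6 p_per.
  exact: (iffP eqP).
rewrite /classified6 !modn_dvdm //.
split=> [/orP[] /and3P[/eqP n_mod k_mod /hasP[j]] | [[n3 k3 [j j3 aj]] | [n6 k6 [j j6 aj]]]].
- rewrite mem_iota => j3 /(patternP _ (Cj_pattern_periodic (N := 6) j erefl)) aj.
  by left; split=> //; exists j.
- rewrite mem_iota => j6 /(patternP _ (Cpj_pattern_periodic (N := 6) j erefl)) aj.
  by right; split=> //; [case/orP: k_mod => /eqP ->; [left | right] | exists j].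
- apply/orP; left; apply/and3P; split; [exact/eqP | by [] |].
  by apply/hasP; exists j; [rewrite mem_iota | apply/(patternP _ (Cj_pattern_periodic (N := 6) j erefl))].
- apply/orP; right; apply/and3P; split; [exact/eqP | by case: k6 => -> |].
  by apply/hasP; exists j; [rewrite mem_iota | apply/(patternP _ (Cpj_pattern_periodic (N := 6) j erefl))].
Qed.
End Classification.

Lemma periodic_code_classification (n kk : nat) (a : nat -> bool) :
  (forall i, a (i + n) = a i) ->
  (forall i, exactly_one (a i) (a (i + 2)) (a (i + 4))) /\
  (forall i, exactly_one (a (i + 3)) (a (i + 2 * kk + 3)) (a (i + kk))) <->
  [/\ n %% 3 = 0, kk %% 3 != 0 & exists2 j, j < 3 & a =1 Cj_pattern j] \/
  [/\ n %% 6 = 0, kk %% 6 = 1 \/ kk %% 6 = 5 & exists2 j, j < 6 & a =1 Cpj_pattern j].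
Proof.
move=> a_n; wlog a6 : / forall i, a (i + 6) = a i.
  move=> equiv; split=> [[S2 Vk] | code].
    have a6 i : a (i + 6) = a i.
      by apply: (exactly_one_shift (S2 i)); have := S2 (i + 2); rewrite -!addnA.
    exact/(equiv a6).
  have a6 i : a (i + 6) = a i.
    by case: code => -[_ _ [j _ aj]]; rewrite !aj ?(Cj_pattern_periodic (N := 6)) ?(Cpj_pattern_periodic (N := 6)).
  exact/(equiv a6).
rewrite local6P // -classified6P //.
have s_mem := mem_bitseqs (mkseq a 6); rewrite size_mkseq in s_mem.
have r_mem : n %% 6 \in iota 0 6 by rewrite mem_iota ltn_pmod.
have k_mem : kk %% 6 \in iota 0 6 by rewrite mem_iota ltn_pmod.
move: (allP (allP (allP classification_table _ s_mem) _ r_mem) _ k_mem).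
by rewrite periodic6_of_period // => /eqP <-.
Qed.

Lemma ex_ord_residue N d c x : d %| N -> x < N ->
  [exists i : 'I_N, x == (d * i + c) %% N] = (x == c %[mod d]).
Proof.
move=> dN xN; apply/existsP/idP => [[i /eqP ->] | xc].
  by rewrite modn_dvdm // mulnC modnMDl.
have N_gt0 : 0 < N by apply: leq_ltn_trans xN.
have cN : c <= x + c * N by nia.
have d_dvd : d %| x + c * N - c.
  by rewrite -eqn_mod_dvd // -(divnK dN) mulnA addnC modnMDl.
exists (Ordinal (ltn_pmod ((x + c * N - c) %/ d) N_gt0)) => /=.
rewrite muln_modr mulnC divnK // -modnDml modn_dvdm ?dvdn_mull // modnDml subnK //.
by rewrite addnC modnMDl modn_small.
Qed.

Lemma existsb_orb (T : finType) (P Q : pred T) :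
  [exists i, P i || Q i] = [exists i, P i] || [exists i, Q i].
Proof.
apply/existsP/orP => [[i /orP[] ?] | [] /existsP[i ?]];
  by [left; apply/existsP; exists i | right; apply/existsP; exists i | exists i; apply/orP; tauto].
Qed.

(* [u_i] is in the set iff [p i], and [v_i] iff [p (i + 3)]. *)
Definition pattern_set (N : nat) (p : nat -> bool) : {set gpvert N} :=
  [set x : gpvert N | p (x.1 + 3 * x.2)].

Lemma Cj_pattern_set N j : 3 %| N -> j < 3 -> Cj N j = pattern_set N (Cj_pattern j).
Proof.
move=> N3 j3; apply/setP => -[i b]; rewrite !inE /= ex_ord_residue // /Cj_pattern.
by apply/eqP/eqP; case: b; lia.
Qed.

Lemma Cpj_pattern_set N j : 6 %| N -> j < 6 -> Cpj N j = pattern_set N (Cpj_pattern j).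
Proof.
move=> N6 j6; apply/setP => -[i b]; rewrite !inE /= /Cpj_pattern.
case: b; rewrite /= existsb_orb.
  under [X in X || _]eq_existsb => i0 do rewrite -addnA.
  under [X in _ || X]eq_existsb => i0 do rewrite -addnA.
  by rewrite !ex_ord_residue //; congr (_ || _); apply/eqP/eqP; lia.
under [X in _ || X]eq_existsb => i0 do rewrite -addnA.
by rewrite !ex_ord_residue //; congr (_ || _); apply/eqP/eqP; lia.
Qed.

Local Open Scope ring_scope.

Lemma sum_addr_shift (G : finZmodType) (f : G -> nat) (c : G) :
  (\sum_z f (z + c)%R = \sum_z f z)%N.
Proof. by rewrite [RHS](reindex_inj (addIr c)). Qed.

Lemma eq1_of_sum_card (I : finType) (F : I -> nat) :
  (forall i, 0 < F i)%N -> (\sum_i F i = #|I|)%N -> forall i, F i = 1%N.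
Proof.
move=> F_gt0 sumF i; have : (\sum_i (F i - 1) == 0)%N.
  by rewrite sumnB // sumF sum1_card subnn.
by rewrite sum_nat_eq0 => /forallP/(_ i); have := F_gt0 i; lia.
Qed.

Lemma sum_exactly_one (G : finType) (f g h : G -> bool) :
  (forall z, exactly_one (f z) (g z) (h z)) -> (\sum_z (f z + g z + h z) = #|G|)%N.
Proof. by move=> one; rewrite -sum1_card; apply: eq_bigr => z _; apply/eqP/one. Qed.

Section LocalCode.

(* [G] stands for Z_n and [e] for 1; [A] and [B] are the u- and v-parts of the code. *)
Variables (G : finZmodType) (e k : G) (A B : G -> bool).
Hypothesis one_u : forall z, exactly_one (A (z - e)) (A (z + e)) (B z).
Hypothesis one_v : forall z, exactly_one (B (z - k)) (B (z + k)) (A z).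

Let count_A := (\sum_z A z)%N.
Let count_B := (\sum_z B z)%N.

Lemma mul3_count_A : (3 * count_A = #|G|)%N.
Proof.
have shiftA c : (\sum_z A (z + c)%R = count_A)%N by exact: sum_addr_shift.
have shiftB c : (\sum_z B (z + c)%R = count_B)%N by exact: sum_addr_shift.
have hu := sum_exactly_one one_u; have hv := sum_exactly_one one_v.
rewrite -hu in hv *; move: hv.
rewrite !big_split /= !shiftA !shiftB -/count_A -/count_B; lia.
Qed.

Lemma B_off_near_A z : A z -> ~~ B (z - k) && ~~ B (z + k).
Proof. by move=> Az; move: (one_v z); rewrite /exactly_one Az; case: (B _); case: (B _). Qed.

Lemma A_near_B_off z : ~~ B z -> A (z - e) || A (z + e).
Proof. by move=> /negbTE nBz; move: (one_u z); rewrite /exactly_one nBz; case: (A _); case: (A _). Qed.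

Lemma B_off_near_A_off z : ~~ A z -> ~~ B (z - e) || ~~ B (z + e).
Proof.
move=> nAz; have : ~~ B (z - k) || ~~ B (z + k).
  by move: (one_v z); rewrite /exactly_one (negbTE nAz); case: (B _); case: (B _).
case/orP=> /A_near_B_off /orP[] /B_off_near_A /andP[nB1 nB2].
- by move: nB2; rewrite addrAC subrK => ->.
- by move: nB2; rewrite addrAC subrK => ->; rewrite orbT.
- by move: nB1; rewrite addrAC addrK => ->.
- by move: nB1; rewrite addrAC addrK => ->; rewrite orbT.
Qed.

Lemma A_cover2 z : A (z - e *+ 2) || A z || A (z + e *+ 2).
Proof.
case Az: (A z); first by rewrite orbT.
rewrite mulr2n opprD !addrA orbF.
by case/orP: (B_off_near_A_off (negbT Az)) => /A_near_B_off;
  rewrite ?subrK ?addrK Az /= ?orbF => ->; rewrite ?orbT.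
Qed.

Lemma exactly_one_A_window z : exactly_one (A (z - e *+ 2)) (A z) (A (z + e *+ 2)).
Proof.
pose f z := (A (z - e *+ 2)%R + A z + A (z + e *+ 2)%R)%N.
have shiftA c : (\sum_z A (z + c)%R = count_A)%N by exact: sum_addr_shift.
have f_gt0 w : (0 < f w)%N.
  by move: (A_cover2 w); rewrite /f; case: (A _); case: (A _); case: (A _).
have count3 := mul3_count_A.
apply/eqP; apply: (eq1_of_sum_card f_gt0).
by rewrite !big_split /= !shiftA -/count_A -count3 !mulSn mul0n addn0 addnA.
Qed.

Lemma exactly_one_A_step2 z :
  exactly_one (A z) (A (z + e *+ 2)) (A (z + e *+ 4)).
Proof. by have := exactly_one_A_window (z + e *+ 2); rewrite addrK -addrA -mulrnDr. Qed.

Lemma B_eq_A_shift3 z : B z = A (z + e *+ 3).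
Proof.
have := exactly_one_A_step2 (z - e).
have -> : z - e + e *+ 2 = z + e by rewrite mulr2n addrA subrK.
have -> : z - e + e *+ 4 = z + e *+ 3 by rewrite mulrS addrA subrK.
by move/exactly_one_third; apply; apply: one_u.
Qed.

End LocalCode.

Lemma exactly_one_uv_iff (G : finZmodType) (e k : G) (A B : G -> bool) :
  (forall z, exactly_one (A (z - e)) (A (z + e)) (B z)) /\
  (forall z, exactly_one (B (z - k)) (B (z + k)) (A z)) <->
  [/\ forall z, B z = A (z + e *+ 3),
       forall z, exactly_one (A z) (A (z + e *+ 2)) (A (z + e *+ 4))
     & forall z, exactly_one (A (z + e *+ 3)) (A (z + k *+ 2 + e *+ 3)) (A (z + k))].
Proof.
split=> [[one_u one_v] | [B3 A2 Ak]].
  split=> [z|z|z]; first exact: B_eq_A_shift3.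
    exact: exactly_one_A_step2 one_u one_v z.
  have := one_v (z + k); rewrite addrK !(B_eq_A_shift3 one_u one_v).
  by rewrite mulr2n [z + (k + k)]addrA.
split=> z; rewrite !B3.
  have := A2 (z - e).
  have -> : z - e + e *+ 2 = z + e by rewrite mulr2n addrA subrK.
  by have -> : z - e + e *+ 4 = z + e *+ 3 by rewrite mulrS addrA subrK.
by have := Ak (z - k); rewrite mulr2n !addrA subrK.
Qed.

Lemma card_in_set3 (T : finType) (C : {set T}) (P : pred T) a b c :
  uniq [:: a; b; c] -> (forall y, P y = [|| y == a, y == b | y == c]) ->
  #|[set y in C | P y]| = ((a \in C) + (b \in C) + (c \in C))%N.
Proof.
move=> abc_uniq Pabc.
have -> : [set y in C | P y] = [set y in [seq y <- [:: a; b; c] | y \in C]].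
  by apply/setP => y; rewrite !inE mem_filter Pabc !inE andbC.
rewrite cardsE (card_uniqP _) ?filter_uniq // size_filter /=.
by case: (a \in C); case: (b \in C); case: (c \in C).
Qed.

Section GeneralizedPetersen.

Variables (m : nat) (k : 'I_m.+3).
Local Notation n := m.+3.

Lemma eq_Zp_add1 (i j : 'I_n) : (j == i + 1) = (val j == (val i + 1) %% n)%N.
Proof. by rewrite -val_eqE /= modnDmr. Qed.

Lemma eq_Zp_addk (i j : 'I_n) : (j == i + k) = (val j == (val i + val k) %% n)%N.
Proof. by []. Qed.

Lemma gp_adj_u (z : 'I_n) y :
  gp_adj k (z, false) y = [|| y == (z - 1, false), y == (z + 1, false) | y == (z, true)].
Proof.
case: y => j [] /=; rewrite /gp_adj /= !xpair_eqE /= ?andbT ?andbF //=.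
  by rewrite eq_sym -val_eqE.
by rewrite orbF [j == z - 1]eq_sym subr_eq !eq_Zp_add1 orbC.
Qed.

Lemma gp_adj_v (z : 'I_n) y :
  gp_adj k (z, true) y = [|| y == (z - k, true), y == (z + k, true) | y == (z, false)].
Proof.
case: y => j [] /=; rewrite /gp_adj /= !xpair_eqE /= ?andbT ?andbF //=.
  by rewrite orbF [j == z - k]eq_sym subr_eq !eq_Zp_addk orbC.
by rewrite eq_sym -val_eqE.
Qed.

Lemma tpc_iff_local (C : {set gpvert n}) : k *+ 2 != 0 ->
  total_perfect_code k C <->
  (forall z, exactly_one ((z - 1, false) \in C) ((z + 1, false) \in C) ((z, true) \in C)) /\
  (forall z, exactly_one ((z - k, true) \in C) ((z + k, true) \in C) ((z, false) \in C)).
Proof.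
move=> k2_neq0.
have two_neq0 : (1 *+ 2 : 'I_n) != 0 by rewrite -val_eqE.
have uniq_u (z : 'I_n) : uniq [:: (z - 1, false); (z + 1, false); (z, true)].
  by rewrite /= !inE !xpair_eqE !andbF !andbT !orbF (inj_eq (addrI z)) eq_sym -subr_eq0 opprK.
have uniq_v (z : 'I_n) : uniq [:: (z - k, true); (z + k, true); (z, false)].
  by rewrite /= !inE !xpair_eqE !andbF !andbT !orbF (inj_eq (addrI z)) eq_sym -subr_eq0 opprK -mulr2n.
rewrite /total_perfect_code /exactly_one; split=> [tpc | [one_u one_v] [z []]].
- split=> z; [rewrite -(card_in_set3 _ (uniq_u z) (gp_adj_u z))
            | rewrite -(card_in_set3 _ (uniq_v z) (gp_adj_v z))]; exact/eqP.
- by apply/eqP; rewrite (card_in_set3 _ (uniq_v z) (gp_adj_v z)).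
- by apply/eqP; rewrite (card_in_set3 _ (uniq_u z) (gp_adj_u z)).
Qed.

Lemma eq_pattern_set (C : {set gpvert n}) (p : nat -> bool) :
  (forall i, p (i + n) = p i) ->
  C = pattern_set n p <->
  (forall z, ((z, true) \in C) = ((z + 3, false) \in C)) /\
  (forall i, ((i%:R, false) \in C) = p i).
Proof.
move=> p_n; have p_mod := periodic_mod p_n.
have val_add3 (z : 'I_n) : nat_of_ord (z + 3) = ((z + 3) %% n)%N by rewrite /= modnDmr.
split=> [-> | [C_v C_u]].
  split=> [z | i]; rewrite !inE.
    by move: (z + 3) (val_add3 z) => w w_val; rewrite /= muln1 muln0 addn0 w_val p_mod.
  by rewrite Zp_nat /= muln0 addn0 p_mod.
apply/setP => -[z []]; rewrite inE /= ?C_v.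
  by rewrite -[z + 3]natr_Zp C_u val_add3 p_mod muln1.
by rewrite -[z]natr_Zp C_u natr_Zp muln0 addn0.
Qed.

Lemma local_natr_iff (A : 'I_n -> bool) :
  (forall z, exactly_one (A z) (A (z + 2)) (A (z + 4))) /\
  (forall z, exactly_one (A (z + 3)) (A (z + k *+ 2 + 3)) (A (z + k))) <->
  (forall i, exactly_one (A i%:R) (A (i + 2)%:R) (A (i + 4)%:R)) /\
  (forall i, exactly_one (A (i + 3)%:R) (A (i + 2 * k + 3)%:R) (A (i + k)%:R)).
Proof.
have natrE i : (i + 2 * k + 3)%:R = i%:R + k *+ 2 + 3 :> 'I_n.
  by rewrite !natrD natr_Zp addr0 mulr2n.
split=> -[S2 Vk]; split=> z.
- by rewrite !natrD; apply: S2.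
- by rewrite natrE !natrD natr_Zp; apply: Vk.
- by have := S2 z; rewrite !natrD natr_Zp.
- by have := Vk z; rewrite natrE !natrD !natr_Zp.
Qed.

Lemma eq_Cj (C : {set gpvert n}) j : n %% 3 = 0 -> j < 3 ->
  C = Cj n j <->
  (forall z, ((z, true) \in C) = ((z + 3, false) \in C)) /\
  (fun i => (i%:R, false) \in C) =1 Cj_pattern j.
Proof.
move=> n3 j3; rewrite (Cj_pattern_set (introT eqP n3) j3).
exact: eq_pattern_set (Cj_pattern_periodic j n3).
Qed.

Lemma eq_Cpj (C : {set gpvert n}) j : n %% 6 = 0 -> j < 6 ->
  C = Cpj n j <->
  (forall z, ((z, true) \in C) = ((z + 3, false) \in C)) /\
  (fun i => (i%:R, false) \in C) =1 Cpj_pattern j.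
Proof.
move=> n6 j6; rewrite (Cpj_pattern_set (introT eqP n6) j6).
exact: eq_pattern_set (Cpj_pattern_periodic j n6).
Qed.

Lemma tpc_iff_classified (C : {set gpvert n}) : k *+ 2 != 0 ->
  total_perfect_code k C <->
  (forall z, ((z, true) \in C) = ((z + 3, false) \in C)) /\
  ([/\ n %% 3 = 0, k %% 3 != 0 & exists2 j, j < 3 & (fun i => (i%:R, false) \in C) =1 Cj_pattern j]
   \/ [/\ n %% 6 = 0, k %% 6 = 1 \/ k %% 6 = 5
        & exists2 j, j < 6 & (fun i => (i%:R, false) \in C) =1 Cpj_pattern j]).
Proof.
move=> k2_neq0; pose A z := (z, false) \in C.
have A_period i : A (i + n)%:R = A i%:R.
  have n0 : n%:R = 0 :> 'I_n by apply/val_inj; rewrite Zp_nat /= modnn.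
  by rewrite natrD n0 addr0.
have classify := iff_trans (local_natr_iff A) (periodic_code_classification _ A_period).
apply: iff_trans (tpc_iff_local C k2_neq0) _.
apply: iff_trans (exactly_one_uv_iff 1 k A (fun z => (z, true) \in C)) _.
by split=> [[B3 S2 Vk] | [B3 /classify[S2 Vk]]]; [split=> //; apply/classify | split].
Qed.

End GeneralizedPetersen.

Local Close Scope ring_scope.

Theorem theorem1p2 (n : nat) (k : 'I_n) (C : {set gpvert n}) :
  3 <= n -> val k != 0 -> (2 * k) %% n != 0 ->
  (total_perfect_code k C <->
   ([/\ n %% 3 = 0, k %% 3 != 0 & exists2 j, j < 3 & C = Cj n j]
    \/ [/\ n %% 6 = 0, (k %% 6 = 1 \/ k %% 6 = 5) & exists2 j, j < 6 & C = Cpj n j])).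
Proof.
case: n k C => [|[|[|m]]] k C // _ _ k2.
have k2_neq0 : (k *+ 2 != 0)%R by rewrite -val_eqE Zp_mulrn /= mulnC.
apply: iff_trans (tpc_iff_classified C k2_neq0) _.
split=> [[vC [[n3 k3 [j j_lt aj]] | [n6 k6 [j j_lt aj]]]]
        | [[n3 k3 [j j_lt /(eq_Cj C n3 j_lt)[vC aj]]] | [n6 k6 [j j_lt /(eq_Cpj C n6 j_lt)[vC aj]]]]].
- by left; split=> //; exists j => //; apply/eq_Cj.
- by right; split=> //; exists j => //; apply/eq_Cpj.
- by split=> //; left; split=> //; exists j.
- by split=> //; right; split=> //; exists j.
Qed.
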